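(* Let $A$ be a monoid and let $\mathfrak{c}=(c_1,c_2,\dots)$ be an infinite sequence of integers with $c_i\ge2$ for all $i$. Then (1) the natural map $A^{\mathfrak{c}}\to(A_{\mathrm{red}})^{\mathfrak{c}}$ is an isomorphism; (2) if $A$ is pc, then the natural map $A^{\mathfrak{c}}\to(A_{\mathrm{sn}})^{\mathfrak{c}}$ is an isomorphism.
   Context: A monoid is a pointed commutative monoid. $A_{\mathrm{red}}$ is $A$ modulo the congruence $a\sim b$ iff $a^n=b^n$ for all $n\gg0$. pc: isomorphic to $C/I$ with $C$ cancellative ($ac=bc,c\ne0\Rightarrow a=b$) and $I$ an ideal. Seminormal: reduced ($a^2=b^2,a^3=b^3\Rightarrow a=b$) and $x^3=y^2\Rightarrow x=z^2,y=z^3$ for some $z$. For pc $A$, $A_{\mathrm{sn}}$ is its seminormalization: the map to a seminormal monoid with $A_{\mathrm{red}}\to A_{\mathrm{sn}}$ injective and every $b\in A_{\mathrm{sn}}$ satisfying $b^n\in A_{\mathrm{red}}$ for all $n\gg0$. For $c\ge2$, $\theta_c:A\to A$, $a\mapsto a^c$, is the dilation, and $A^{\mathfrak{c}}=\mathrm{colim}\{A\xrightarrow{\theta_{c_1}}A\xrightarrow{\theta_{c_2}}\cdots\}$, similarly for $A_{\mathrm{red}}$ and $A_{\mathrm{sn}}$. *)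

From Stdlib Require Import Arith.

(** A "monoid" in the paper: a pointed commutative monoid, i.e. a commutative
    monoid (written multiplicatively, unit [one]) with an absorbing element [zero]. *)
Record Monoid := {
  car :> Type;
  mul : car -> car -> car;
  one : car;
  zero : car;
  mulA : forall x y z, mul x (mul y z) = mul (mul x y) z;
  mulC : forall x y, mul x y = mul y x;
  mul1m : forall x, mul one x = x;
  mul0m : forall x, mul zero x = zero
}.

Arguments mul {m} _ _.
Arguments one {m}.
Arguments zero {m}.

Fixpoint mpow {M : Monoid} (a : M) (n : nat) : M :=
  match n with
  | O => one
  | S k => mul a (mpow a k)
  end.

Definition is_hom {M N : Monoid} (f : M -> N) : Prop :=
  (forall x y, f (mul x y) = mul (f x) (f y)) /\ f one = one /\ f zero = zero.

Definition red_equiv {M : Monoid} (a b : M) : Prop :=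
  exists N, forall n, N <= n -> mpow a n = mpow b n.

(** (R, q) is A_red: q : A -> R is a surjective homomorphism whose fibres
    are exactly the classes of [red_equiv], i.e. R = A/~ . *)
Definition is_reduction (A R : Monoid) (q : A -> R) : Prop :=
  is_hom q /\ (forall r : R, exists a, q a = r) /\
  (forall a b, q a = q b <-> red_equiv a b).

Definition cancellative (C : Monoid) : Prop :=
  forall a b c : C, c <> zero -> mul a c = mul b c -> a = b.

Definition is_ideal (C : Monoid) (I : C -> Prop) : Prop :=
  I zero /\ forall x y : C, I x -> I (mul x y).

(** pc: A is isomorphic to the Rees quotient C/I (I collapsed to 0) with C
    cancellative; equivalently there is a surjective hom C -> A whose fibres
    are the classes of C/I. *)
Definition pc (A : Monoid) : Prop :=
  exists (C : Monoid) (I : C -> Prop) (p : C -> A),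
    cancellative C /\ is_ideal C I /\ is_hom p /\
    (forall a : A, exists x, p x = a) /\
    (forall x y, p x = p y <-> (x = y \/ (I x /\ I y))).

Definition reduced (M : Monoid) : Prop :=
  forall a b : M, mpow a 2 = mpow b 2 -> mpow a 3 = mpow b 3 -> a = b.

Definition seminormal (M : Monoid) : Prop :=
  reduced M /\
  forall x y : M, mpow x 3 = mpow y 2 -> exists z, x = mpow z 2 /\ y = mpow z 3.

(** (S, phi) is the seminormalization A_sn of A: S seminormal, the induced map
    A_red -> S is well defined and injective (phi a = phi b iff a ~ b), and every
    b in S has b^n in (the image of) A_red for all n >> 0. *)
Definition is_seminormalization (A S : Monoid) (phi : A -> S) : Prop :=
  seminormal S /\ is_hom phi /\
  (forall a b, phi a = phi b <-> red_equiv a b) /\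
  (forall b : S, exists N, forall n, N <= n -> exists a, phi a = mpow b n).

(** Sequential colimit M^c = colim (M --theta_{c 0}--> M --theta_{c 1}--> ...),
    theta_c(a) = a^c.  An element is represented by (i, a): a in the i-th copy.
    [trans c i n a] is the image of a (in copy i) in copy i+n. *)
Fixpoint trans {M : Monoid} (c : nat -> nat) (i n : nat) (a : M) : M :=
  match n with
  | O => a
  | S k => mpow (trans c i k a) (c (i + k))
  end.

Definition colim_eq {M : Monoid} (c : nat -> nat) (x y : nat * M) : Prop :=
  exists k, fst x <= k /\ fst y <= k /\
    trans c (fst x) (k - fst x) (snd x) = trans c (fst y) (k - fst y) (snd y).

(** The map M^c -> N^c induced by f : M -> N is (i, a) |-> (i, f a).
    It is an isomorphism (it is always a monoid hom of the colimits when f is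
    a hom) iff it is a bijection of the colimits, i.e. injective and surjective
    modulo [colim_eq]. *)
Definition colim_map_bijective {M N : Monoid} (c : nat -> nat) (f : M -> N) : Prop :=
  (forall x y : nat * M,
     colim_eq c (fst x, f (snd x)) (fst y, f (snd y)) -> colim_eq c x y) /\
  (forall y : nat * N, exists x : nat * M, colim_eq c (fst x, f (snd x)) y).

(* The transition map from copy i to copy i+n of M^c is a |-> a^e with
   e = c_i c_(i+1) ... c_(i+n-1) >= 2^n.  Hence two elements become equal in
   the colimit exactly when some of their powers of arbitrarily large exponent
   agree, i.e. when they agree in M_red; so a homomorphism f whose fibres are the
   classes of ~ is injective on colimits.  It is surjective on colimits as soon
   as every b has b^n in the image of f for all n >> 0, since then the class of
   b in copy i is the class of a preimage of b^e in copy i+n.  Both A -> A_red and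
   A -> A_sn have these two properties by definition. *)

From Stdlib Require Import Arith Lia.

Section Powers.
Context {M : Monoid}.

Lemma mpow_add (a : M) n m : mpow a (n + m) = mul (mpow a n) (mpow a m).
Proof.
  induction n as [|n IH]; simpl.
  - now rewrite mul1m.
  - now rewrite IH, mulA.
Qed.

Lemma mpow_mul_distr (x y : M) n : mpow (mul x y) n = mul (mpow x n) (mpow y n).
Proof.
  induction n as [|n IH]; simpl.
  - now rewrite mul1m.
  - rewrite IH, !mulA. f_equal.
    rewrite <- !mulA. f_equal. apply mulC.
Qed.

Lemma mpow_mul (a : M) n m : mpow a (n * m) = mpow (mpow a n) m.
Proof.
  induction n as [|n IH]; simpl.
  - induction m as [|m IHm]; simpl; auto. now rewrite <- IHm, mul1m.
  - now rewrite mpow_add, IH, mpow_mul_distr.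
Qed.

End Powers.

Lemma hom_mpow {M N : Monoid} (f : M -> N) (hf : is_hom f) a n :
  f (mpow a n) = mpow (f a) n.
Proof.
  destruct hf as [fM [f1 _]].
  induction n as [|n IH]; simpl; auto. now rewrite fM, IH.
Qed.

Section Transitions.
Variable c : nat -> nat.

Fixpoint trans_exp (i n : nat) : nat :=
  match n with
  | O => 1
  | S k => trans_exp i k * c (i + k)
  end.

Lemma trans_mpow {M : Monoid} i n (a : M) : trans c i n a = mpow a (trans_exp i n).
Proof.
  induction n as [|n IH]; simpl.
  - now rewrite mulC, mul1m.
  - now rewrite IH, mpow_mul.
Qed.

Lemma trans_add {M : Monoid} i n m (a : M) :
  trans c i (n + m) a = trans c (i + n) m (trans c i n a).
Proof.
  induction m as [|m IH].
  - now rewrite Nat.add_0_r.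
  - rewrite Nat.add_succ_r; simpl. now rewrite IH, Nat.add_assoc.
Qed.

Lemma hom_trans {M N : Monoid} (f : M -> N) (hf : is_hom f) i n a :
  f (trans c i n a) = trans c i n (f a).
Proof.
  induction n as [|n IH]; simpl; auto. now rewrite hom_mpow, IH.
Qed.

Hypothesis hc : forall i, 2 <= c i.

Lemma pow2_le_trans_exp i n : 2 ^ n <= trans_exp i n.
Proof.
  induction n as [|n IH]; simpl; auto.
  specialize (hc (i + n)). nia.
Qed.

Lemma le_trans_exp i n : n <= trans_exp i n.
Proof.
  pose proof (Nat.pow_gt_lin_r 2 n ltac:(lia)). pose proof (pow2_le_trans_exp i n). lia.
Qed.

Lemma trans_eq_of_red_equiv {M : Monoid} k (x y : M) :
  red_equiv x y -> exists K, trans c k K x = trans c k K y.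
Proof.
  intros [K hK]. exists K. rewrite !trans_mpow. apply hK, le_trans_exp.
Qed.

Lemma colim_map_injective {M N : Monoid} (f : M -> N) (hf : is_hom f)
  (hker : forall a b, f a = f b -> red_equiv a b) (x y : nat * M) :
  colim_eq c (fst x, f (snd x)) (fst y, f (snd y)) -> colim_eq c x y.
Proof.
  destruct x as [i a], y as [j b]; simpl.
  intros [k [hi [hj he]]]; simpl in *.
  rewrite <- !(hom_trans f hf) in he.
  destruct (trans_eq_of_red_equiv k _ _ (hker _ _ he)) as [K hK].
  exists (k + K); simpl; repeat split; try lia.
  replace (k + K - i) with (k - i + K) by lia.
  replace (k + K - j) with (k - j + K) by lia.
  rewrite !trans_add.
  now replace (i + (k - i)) with k by lia; replace (j + (k - j)) with k by lia.
Qed.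

Lemma colim_map_surjective {M N : Monoid} (f : M -> N)
  (hpow : forall b : N, exists K, forall n, K <= n -> exists a, f a = mpow b n)
  (y : nat * N) : exists x : nat * M, colim_eq c (fst x, f (snd x)) y.
Proof.
  destruct y as [i b]. destruct (hpow b) as [K hK].
  destruct (hK (trans_exp i K) (le_trans_exp i K)) as [a ha].
  exists (i + K, a), (i + K); simpl; repeat split; try lia.
  rewrite Nat.sub_diag. replace (i + K - i) with K by lia.
  cbn [trans]. now rewrite trans_mpow, ha.
Qed.

Lemma colim_map_bijective_of_red {M N : Monoid} (f : M -> N) (hf : is_hom f)
  (hker : forall a b, f a = f b <-> red_equiv a b)
  (hpow : forall b : N, exists K, forall n, K <= n -> exists a, f a = mpow b n) :
  colim_map_bijective c f.
Proof.
  split.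
  - apply colim_map_injective; [exact hf|]. intros a b. apply hker.
  - exact (colim_map_surjective f hpow).
Qed.

End Transitions.

Theorem lemma3p5 (A : Monoid) (c : nat -> nat) (hc : forall i, 2 <= c i) :
  (forall (R : Monoid) (q : A -> R), is_reduction A R q -> colim_map_bijective c q) /\
  (pc A -> forall (S : Monoid) (phi : A -> S),
     is_seminormalization A S phi -> colim_map_bijective c phi).
Proof.
  split.
  - intros R q [hq [hsurj hker]].
    apply colim_map_bijective_of_red; auto.
    intros b. destruct (hsurj b) as [a ha]. exists 0. intros n _.
    exists (mpow a n). now rewrite (hom_mpow q hq), ha.
  - intros _ S phi [_ [hphi [hker hpow]]].
    now apply colim_map_bijective_of_red.
Qed.
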